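(* Let $\sigma>0$, $\bar\gamma>0$, $c_\infty\ge0$, and for $\gamma\in(0,\bar\gamma]$ let $\tau_\gamma:[0,\infty)\to[0,\infty)$ be non-decreasing with $\tau_\gamma(0)=0$, such that there exist $R_1,L\ge0$, $m>0$ with $\sup_{r>0}\tau_\gamma(r)/r\le1+\gamma L$ and $\sup_{r>R_1}\tau_\gamma(r)/r\le1-\gamma m$ for all $\gamma\in(0,\bar\gamma]$. Let $Q_\gamma$ be the Markov kernel on $[0,\infty)$ $$Q_\gamma(w,A)=\delta_0(A)\int_{\mathbb{R}}\bar p_{\sigma^2\gamma}(\tau_\gamma(w)+\gamma c_\infty,g)\varphi(g)dg+\int_{\mathbb{R}}\mathbb{1}_A(\tau_\gamma(w)+\gamma c_\infty-2\sigma\gamma^{1/2}g)\{1-\bar p_{\sigma^2\gamma}(\tau_\gamma(w)+\gamma c_\infty,g)\}\varphi(g)dg,$$ with $\bar p_{\sigma^2\gamma}(a,g)=1\wedge\varphi_{\sigma^2\gamma}(a-\sigma\sqrt\gamma g)/\varphi_{\sigma^2\gamma}(\sigma\sqrt\gamma g)$. Let $a>0$, $\mathcal W_a^*(w)=e^{aw}-1$, and define $\tilde R_a=1\vee R_1\vee[(4a\sigma^2+2c_\infty)/m]\vee16\sigma^2a/m$, $\lambda_a=\exp(-am\tilde R_a/8)$, $C_a=a(c_\infty+2a\sigma^2)e^{a\bar\gamma(c_\infty+2a\sigma^2)}+2\sigma^2(2\pi)^{-1/2}ae^{(a+2\sigma\bar\gamma^{1/2}a)^2/2}$, $R_a=\tilde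 R_a\vee a^{-1}\log\big(1+C_a/(-\log(\lambda_a)\lambda_a^{2\bar\gamma})\big)$, $\bar\gamma_1=\bar\gamma\wedge1/(-\log\lambda_a)\wedge1/(4\sigma^2)$, $B_a=e^{a(c_\infty+2a\sigma^2+LR_a)}$, $D_a=a(c_\infty+2a\sigma^2+LR_a)e^{a\bar\gamma(c_\infty+2a\sigma^2+LR_a)}+2\sigma^2(2\pi)^{-1/2}ae^{(a+2\sigma\bar\gamma^{1/2}a)^2/2}+2\sigma^2a^2\lambda_a^{2\bar\gamma}\mathcal W_a^*(R_a)$. Then for all $w\ge0$ and $\gamma\in(0,\bar\gamma_1]$, $$Q_\gamma\mathcal W_a^*(w)\le\lambda_a^\gamma\mathcal W_a^*(w)\mathbb{1}_{[R_a,\infty)}(w)+B_a^\gamma\mathcal W_a^*(w)\mathbb{1}_{[0,R_a)}(w)+\gamma D_a\mathbb{1}_{[0,R_a)}(w).$$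
   Context: $\varphi$ is the standard normal density and $\varphi_s(t)=(2\pi s)^{-1/2}e^{-t^2/(2s)}$. *)

From Stdlib Require Import Reals Lra.
From Coquelicot Require Import Coquelicot.
Open Scope R_scope.

Definition phi (t : R) : R := / sqrt (2 * PI) * exp (- t ^ 2 / 2).
Definition phi_s (s t : R) : R := / sqrt (2 * PI * s) * exp (- t ^ 2 / (2 * s)).

Definition int_R (f : R -> R) : R :=
  RInt_gen f (Rbar_locally m_infty) (Rbar_locally p_infty).

Definition pbar (sigma gamma a g : R) : R :=
  Rmin 1 (phi_s (sigma ^ 2 * gamma) (a - sigma * sqrt gamma * g)
          / phi_s (sigma ^ 2 * gamma) (sigma * sqrt gamma * g)).

(* Q_gamma f (w) = \int f(y) Q_gamma(w, dy) for the kernel Q_gamma *)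
Definition Qker (sigma cinf : R) (tau : R -> R -> R) (gamma : R)
    (f : R -> R) (w : R) : R :=
  let x := tau gamma w + gamma * cinf in
  f 0 * int_R (fun g => pbar sigma gamma x g * phi g)
  + int_R (fun g => f (x - 2 * sigma * sqrt gamma * g)
                     * (1 - pbar sigma gamma x g) * phi g).

Definition Wstar (a w : R) : R := exp (a * w) - 1.

Definition indic {P : Prop} (d : {P} + {~ P}) : R := if d then 1 else 0.

Definition Rtilde (sigma cinf R1 m a : R) : R :=
  Rmax (Rmax (Rmax 1 R1) ((4 * a * sigma ^ 2 + 2 * cinf) / m))
       (16 * sigma ^ 2 * a / m).

Definition lam (sigma cinf R1 m a : R) : R :=
  exp (- a * m * Rtilde sigma cinf R1 m a / 8).

Definition Ca (sigma gbar cinf a : R) : R :=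
  a * (cinf + 2 * a * sigma ^ 2) * exp (a * gbar * (cinf + 2 * a * sigma ^ 2))
  + 2 * sigma ^ 2 * / sqrt (2 * PI) * a
      * exp ((a + 2 * sigma * sqrt gbar * a) ^ 2 / 2).

Definition Ra (sigma gbar cinf R1 m a : R) : R :=
  let l := lam sigma cinf R1 m a in
  Rmax (Rtilde sigma cinf R1 m a)
       (/ a * ln (1 + Ca sigma gbar cinf a / (- ln l * Rpower l (2 * gbar)))).

Definition gbar1 (sigma gbar cinf R1 m a : R) : R :=
  Rmin (Rmin gbar (/ (- ln (lam sigma cinf R1 m a)))) (/ (4 * sigma ^ 2)).

Definition Ba (sigma gbar cinf R1 L m a : R) : R :=
  exp (a * (cinf + 2 * a * sigma ^ 2 + L * Ra sigma gbar cinf R1 m a)).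

Definition Da (sigma gbar cinf R1 L m a : R) : R :=
  let r := Ra sigma gbar cinf R1 m a in
  a * (cinf + 2 * a * sigma ^ 2 + L * r)
      * exp (a * gbar * (cinf + 2 * a * sigma ^ 2 + L * r))
  + 2 * sigma ^ 2 * / sqrt (2 * PI) * a
      * exp ((a + 2 * sigma * sqrt gbar * a) ^ 2 / 2)
  + 2 * sigma ^ 2 * a ^ 2 * Rpower (lam sigma cinf R1 m a) (2 * gbar) * Wstar a r.

From Stdlib Require Import Reals Lra Classical FunctionalExtensionality.
From Coquelicot Require Import Coquelicot.
Open Scope R_scope.

(* Since W*_a(0) = 0 the atom at 0 contributes nothing, and with b = σ√γ and
   x = τ_γ(w) + γc_∞ the remaining weight is (1 - p̄)φ(g) = (φ(g) - φ(x/b - g))⁺.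
   The reflection g ↦ x/b - g sends the proposal x - 2bg to its negative and swaps
   φ(g) and φ(x/b - g); as e^Y + e^-Y ≥ 2, pairing g with its reflection bounds the
   integral by that of (e^{a(x-2bg)} - 1)φ(g), which is at most e^{ax + 2a²σ²γ} - 1
   by completing the square and ∫φ ≤ 1.  It remains to bound the exponent: for
   w ≥ R_a the contraction τ_γ(w) ≤ (1 - γm)w beats the drift γ(c_∞ + 2aσ²) because
   mR̃_a ≥ 4aσ² + 2c_∞, while for w < R_a the expansion τ_γ(w) ≤ (1 + γL)w costs at
   most a factor e^{γa(c_∞ + 2aσ² + LR_a)}. *)

Lemma continuous_of_ex_derive (f : R -> R) x : ex_derive f x -> continuous f x.
Proof. exact (ex_derive_continuous f x). Qed.

Lemma ex_RInt_of_continuous (f : R -> R) a b : (forall t, continuous f t) -> ex_RInt f a b.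
Proof. intros Hf. apply (ex_RInt_continuous (V := R_CompleteNormedModule)); auto. Qed.

Lemma RInt_ext_R (f g : R -> R) a b :
  (forall x, Rmin a b < x < Rmax a b -> f x = g x) -> RInt f a b = RInt g a b.
Proof. apply RInt_ext. Qed.

Lemma RInt_scal_R (f : R -> R) a b k : ex_RInt f a b -> RInt (fun t => k * f t) a b = k * RInt f a b.
Proof. exact (RInt_scal (V := R_CompleteNormedModule) f a b k). Qed.

Lemma continuous_reflect (h : R -> R) s t :
  (forall t, continuous h t) -> continuous (fun g => h (s - g)) t.
Proof.
  intros Hh. apply (continuous_comp (fun g => s - g) h); [| apply Hh].
  apply continuous_of_ex_derive. auto_derive. auto.
Qed.

Lemma continuous_Rmax0 (h : R -> R) t : continuous h t -> continuous (fun u => Rmax 0 (h u)) t.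
Proof.
  intros Hh.
  apply continuous_ext with (f := fun u => (h u + Rabs (h u)) / 2).
  { intros u. change (@eq R ((h u + Rabs (h u)) / 2) (Rmax 0 (h u))).
    unfold Rmax. destruct (Rle_dec 0 (h u)).
    - rewrite Rabs_pos_eq by lra. field.
    - rewrite Rabs_left by lra. field. }
  apply (continuous_mult (K := R_AbsRing)); [| apply continuous_const].
  apply (continuous_plus (V := R_NormedModule)); [exact Hh | apply continuous_Rabs_comp, Hh].
Qed.

Lemma exp_le x y : x <= y -> exp x <= exp y.
Proof. intros [Hlt | ->]; [apply Rlt_le, exp_increasing |]; lra. Qed.

Lemma Rpower_exp u g : Rpower (exp u) g = exp (g * u).
Proof. unfold Rpower. rewrite ln_exp. reflexivity. Qed.

Lemma exp_add_exp_opp_ge_2 Y : 2 <= exp Y + exp (- Y).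
Proof. pose proof (exp_ineq1_le Y). pose proof (exp_ineq1_le (- Y)). lra. Qed.

(** * The Gaussian mass bound *)

Lemma sqrt_2PI_pos : 0 < sqrt (2 * PI).
Proof. apply sqrt_lt_R0. pose proof PI_RGT_0. lra. Qed.

Lemma phi_pos t : 0 < phi t.
Proof.
  unfold phi. apply Rmult_lt_0_compat; [apply Rinv_0_lt_compat, sqrt_2PI_pos | apply exp_pos].
Qed.

Lemma continuous_phi t : continuous phi t.
Proof. apply continuous_of_ex_derive. unfold phi. auto_derive. auto. Qed.

Lemma continuity_pt_phi t : continuity_pt phi t.
Proof. apply continuity_pt_filterlim, continuous_phi. Qed.

Lemma continuity_2d_pt_phi_comp (g : R -> R -> R) x y :
  continuity_2d_pt g x y -> continuity_2d_pt (fun u v => phi (g u v)) x y.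
Proof. intros Hg. apply continuity_1d_2d_pt_comp; [apply continuity_pt_phi | exact Hg]. Qed.

Lemma ex_RInt_phi a b : ex_RInt phi a b.
Proof. apply ex_RInt_of_continuous, continuous_phi. Qed.

Lemma phi_mul_phi x y : phi x * phi y = exp (- (x ^ 2 + y ^ 2) / 2) / (2 * PI).
Proof.
  pose proof sqrt_2PI_pos. pose proof PI_RGT_0.
  assert (Hs : sqrt (2 * PI) * sqrt (2 * PI) = 2 * PI) by (apply sqrt_sqrt; lra).
  unfold phi. replace (- (x ^ 2 + y ^ 2) / 2) with (- x ^ 2 / 2 + - y ^ 2 / 2) by field.
  rewrite exp_plus. set (s := sqrt (2 * PI)) in *. rewrite <- Hs. field. lra.
Qed.

Definition Phi0 (X : R) : R := RInt phi 0 X.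

Lemma is_derive_Phi0 x : is_derive Phi0 x (phi x).
Proof.
  apply is_derive_RInt with (a := 0); [| apply continuous_phi].
  apply filter_forall. intros. apply (RInt_correct (V := R_CompleteNormedModule)), ex_RInt_phi.
Qed.

Lemma RInt_phi c d : RInt phi c d = Phi0 d - Phi0 c.
Proof.
  unfold Phi0.
  assert (H := RInt_Chasles (V := R_CompleteNormedModule) phi 0 c d (ex_RInt_phi _ _) (ex_RInt_phi _ _)).
  change (RInt phi 0 c + RInt phi c d = RInt phi 0 d) in H. lra.
Qed.

(* (Phi0 X)² + gauss_aux X is constant: the classical evaluation of the Gaussian
   integral without polar coordinates. *)
Definition gauss_kernel (x t : R) : R := exp (- x ^ 2 * (1 + t ^ 2) / 2) / (PI * (1 + t ^ 2)).

Definition gauss_aux (x : R) : R := RInt (gauss_kernel x) 0 1.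

Lemma is_derive_gauss_kernel x t :
  is_derive (fun u => gauss_kernel u t) x (- 2 * phi x * (x * phi (x * t))).
Proof.
  pose proof PI_RGT_0. assert (0 < 1 + t ^ 2) by nra.
  unfold gauss_kernel. auto_derive; [nra |].
  replace (-2 * phi x * (x * phi (x * t))) with (- 2 * x * (phi x * phi (x * t))) by ring.
  rewrite phi_mul_phi.
  replace (- (x ^ 2 + (x * t) ^ 2) / 2) with (- (x * (x * 1)) * (1 + t * (t * 1)) * / 2) by field.
  field. nra.
Qed.

Lemma is_derive_gauss_aux x : is_derive gauss_aux x (- 2 * phi x * Phi0 x).
Proof.
  assert (Hd : forall u t, Derive (fun z => gauss_kernel z t) u = - 2 * phi u * (u * phi (u * t)))
    by (intros; apply is_derive_unique, is_derive_gauss_kernel).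
  replace (- 2 * phi x * Phi0 x) with (RInt (fun t => Derive (fun u => gauss_kernel u t) x) 0 1).
  - apply is_derive_RInt_param.
    + apply filter_forall. intros u t _. eexists. apply is_derive_gauss_kernel.
    + intros t _. apply continuity_2d_pt_ext with (f := fun u v => - 2 * phi u * (u * phi (u * v))).
      { intros; symmetry; apply Hd. }
      apply (continuity_2d_pt_mult (fun u _ => - 2 * phi u) (fun u v => u * phi (u * v))).
      * apply (continuity_2d_pt_mult (fun _ _ => - 2) (fun u _ => phi u));
          [apply continuity_2d_pt_const | apply (continuity_2d_pt_phi_comp (fun u _ => u)), continuity_2d_pt_id1].
      * apply (continuity_2d_pt_mult (fun u _ => u) (fun u v => phi (u * v)));
          [apply continuity_2d_pt_id1 | apply (continuity_2d_pt_phi_comp (fun u v => u * v))].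
        apply (continuity_2d_pt_mult (fun u _ => u) (fun _ v => v));
          [apply continuity_2d_pt_id1 | apply continuity_2d_pt_id2].
    + apply filter_forall. intros u. apply ex_RInt_of_continuous. intros t.
      apply continuous_of_ex_derive. unfold gauss_kernel. auto_derive.
      pose proof PI_RGT_0. nra.
  - rewrite (RInt_ext_R _ (fun t => (- 2 * phi x) * (x * phi (x * t + 0))))
      by (intros t _; rewrite Hd, Rplus_0_r; reflexivity).
    rewrite RInt_scal_R.
    2: { apply ex_RInt_of_continuous. intros t. apply continuous_of_ex_derive.
         unfold phi. auto_derive. auto. }
    rewrite (RInt_comp_lin (V := R_CompleteNormedModule)) by apply ex_RInt_phi.
    unfold Phi0. rewrite Rmult_0_r, Rmult_1_r, !Rplus_0_r. reflexivity.
Qed.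

Lemma gauss_aux_0 : gauss_aux 0 = 1 / 4.
Proof.
  pose proof PI_RGT_0.
  unfold gauss_aux. rewrite (RInt_ext_R _ (fun t => / PI * / (1 + t²))).
  2: { intros t _. unfold gauss_kernel, Rsqr.
       replace (- 0 ^ 2 * (1 + t ^ 2) / 2) with 0 by field. rewrite exp_0. field. nra. }
  rewrite RInt_scal_R.
  2: { apply ex_RInt_of_continuous. intros t. apply continuous_of_ex_derive.
       auto_derive. unfold Rsqr. nra. }
  rewrite (is_RInt_unique _ 0 1 (minus (atan 1) (atan 0))).
  - rewrite atan_1, atan_0. unfold minus, plus, opp, scal; simpl. unfold mult; simpl. field. lra.
  - apply (is_RInt_derive (V := R_CompleteNormedModule)); intros; [apply is_derive_atan |].
    apply continuous_of_ex_derive. auto_derive. unfold Rsqr. nra.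
Qed.

Lemma Phi0_sqr_add_gauss_aux X : Phi0 X ^ 2 + gauss_aux X = 1 / 4.
Proof.
  assert (H0 : Phi0 0 = 0) by apply (RInt_point (V := R_CompleteNormedModule)).
  assert (Hd : forall t, is_derive (fun x => Phi0 x ^ 2 + gauss_aux x) t zero).
  { intros t. replace (@zero R_NormedModule) with (2 * phi t * Phi0 t + - 2 * phi t * Phi0 t)
      by (unfold zero; simpl; ring).
    apply (is_derive_plus (fun x => Phi0 x ^ 2)); [| apply is_derive_gauss_aux].
    replace (2 * phi t * Phi0 t) with (INR 2 * phi t * Phi0 t ^ (pred 2)) by (simpl; ring).
    apply (is_derive_pow Phi0), is_derive_Phi0. }
  transitivity (Phi0 0 ^ 2 + gauss_aux 0); [| rewrite H0, gauss_aux_0; ring].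
  destruct (Rtotal_order X 0) as [HX | [-> | HX]]; [| reflexivity |].
  - apply (eq_is_derive (fun x => Phi0 x ^ 2 + gauss_aux x)); auto.
  - symmetry. apply (eq_is_derive (fun x => Phi0 x ^ 2 + gauss_aux x)); auto.
Qed.

Lemma gauss_aux_ge0 x : 0 <= gauss_aux x.
Proof.
  pose proof PI_RGT_0.
  apply RInt_ge_0; [lra | |].
  - apply ex_RInt_of_continuous. intros t. apply continuous_of_ex_derive.
    unfold gauss_kernel. auto_derive. nra.
  - intros t _. unfold gauss_kernel. apply Rlt_le, Rdiv_lt_0_compat; [apply exp_pos | nra].
Qed.

Lemma Rabs_Phi0_le X : Rabs (Phi0 X) <= 1 / 2.
Proof.
  rewrite <- (Rabs_pos_eq (1 / 2)) by lra. apply Rsqr_le_abs_0.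
  pose proof (Phi0_sqr_add_gauss_aux X). pose proof (gauss_aux_ge0 X).
  unfold Rsqr. nra.
Qed.

Lemma RInt_phi_le_1 c d : RInt phi c d <= 1.
Proof.
  rewrite RInt_phi. pose proof (Rabs_Phi0_le c). pose proof (Rabs_Phi0_le d).
  pose proof (Rle_abs (Phi0 d)). pose proof (Rle_abs (- Phi0 c)). rewrite Rabs_Ropp in *. lra.
Qed.

Lemma phi_le_inv t : 0 <= t -> phi t <= / (1 + t).
Proof.
  intros Ht. pose proof PI2_3_2.
  assert (Hs : 2 <= sqrt (2 * PI)).
  { assert (H4 : sqrt (2 * 2) = 2) by (apply sqrt_square; lra).
    rewrite <- H4 at 1. apply sqrt_le_1_alt. lra. }
  assert (He : exp (- t ^ 2 / 2) <= / (1 + t ^ 2 / 2)).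
  { replace (- t ^ 2 / 2) with (- (t ^ 2 / 2)) by field. rewrite exp_Ropp.
    apply Rinv_le_contravar; [nra | apply exp_ineq1_le]. }
  unfold phi. apply Rle_trans with (/ 2 * / (1 + t ^ 2 / 2)).
  - apply Rmult_le_compat; [| left; apply exp_pos | apply Rinv_le_contravar | exact He]; try lra.
    left; apply Rinv_0_lt_compat; lra.
  - rewrite <- Rinv_mult. apply Rinv_le_contravar; nra.
Qed.

Lemma RInt_phi_tail_le Q d : 0 <= Q -> 0 <= d -> RInt phi Q (Q + d) <= d / (1 + Q).
Proof.
  intros HQ Hd.
  apply Rle_trans with (RInt (fun _ => / (1 + Q)) Q (Q + d)).
  - apply RInt_le; [lra | apply ex_RInt_phi | apply ex_RInt_of_continuous, continuous_const |].
    intros t Ht. apply Rle_trans with (/ (1 + t)); [apply phi_le_inv; lra |].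
    apply Rinv_le_contravar; lra.
  - rewrite RInt_const. right. unfold scal; simpl; unfold mult; simpl. field. lra.
Qed.

Lemma RInt_phi_shift_le k P Q d : 1 <= k -> 0 <= Q -> 0 <= d ->
  k * RInt phi (P + d) (Q + d) - RInt phi P Q <= k - 1 + k * (d / (1 + Q)).
Proof.
  intros Hk HQ Hd.
  assert (Hhead : 0 <= RInt phi P (P + d)).
  { apply RInt_ge_0; [lra | apply ex_RInt_phi | intros; apply Rlt_le, phi_pos]. }
  pose proof (RInt_phi_tail_le Q d HQ Hd). pose proof (RInt_phi_le_1 P Q).
  rewrite !RInt_phi in *. nra.
Qed.

(** * Proper and improper integrals *)

Lemma RInt_le_RInt_superinterval (f : R -> R) a c d b :
  (forall t, continuous f t) -> (forall t, 0 <= f t) ->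
  a <= c -> c <= d -> d <= b -> RInt f c d <= RInt f a b.
Proof.
  intros Hc Hp Hac Hcd Hdb.
  assert (Hex : forall u v, ex_RInt f u v) by (intros; apply ex_RInt_of_continuous, Hc).
  assert (Hnn : forall u v, u <= v -> 0 <= RInt f u v)
    by (intros; apply RInt_ge_0; auto).
  assert (H1 := RInt_Chasles (V := R_CompleteNormedModule) f a c b (Hex _ _) (Hex _ _)).
  assert (H2 := RInt_Chasles (V := R_CompleteNormedModule) f c d b (Hex _ _) (Hex _ _)).
  change (RInt f a c + RInt f c b = RInt f a b) in H1.
  change (RInt f c d + RInt f d b = RInt f c b) in H2.
  pose proof (Hnn a c Hac). pose proof (Hnn d b Hdb). lra.
Qed.

(* [int_R] is a limit and takes a junk value when the limit does not exist: the
   supremum of the proper integrals is shown to be that limit. *)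
Lemma int_R_le (f : R -> R) V :
  (forall t, continuous f t) -> (forall t, 0 <= f t) ->
  (forall c d, c <= d -> RInt f c d <= V) -> int_R f <= V.
Proof.
  intros Hc Hp Hb.
  set (E := fun r => exists c d, c <= d /\ r = RInt f c d).
  destruct (completeness E) as [S [HS_ub HS_lub]].
  { exists V. intros r [c [d [Hcd ->]]]. auto. }
  { exists (RInt f 0 0), 0, 0. split; [lra | reflexivity]. }
  assert (HSV : S <= V) by (apply HS_lub; intros r [c [d [Hcd ->]]]; auto).
  enough (Hgen : is_RInt_gen f (Rbar_locally m_infty) (Rbar_locally p_infty) S)
    by (unfold int_R; rewrite (is_RInt_gen_unique _ _ Hgen); exact HSV).
  intros P [eps HP].
  assert (Hnear : exists c d, c <= d /\ S - eps < RInt f c d).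
  { apply NNPP. intros Hn.
    enough (S <= S - eps) by (pose proof (cond_pos eps); lra).
    apply HS_lub. intros r [c [d [Hcd ->]]].
    apply Rnot_lt_le. intros Hlt. apply Hn. exists c, d. auto. }
  destruct Hnear as [c0 [d0 [Hcd0 Hlt]]].
  apply Filter_prod with (Q := fun a => a < c0) (R := fun b => d0 < b);
    [exists c0; auto | exists d0; auto |].
  intros a b Ha Hb'. exists (RInt f a b). split.
  - apply (RInt_correct (V := R_CompleteNormedModule)), ex_RInt_of_continuous, Hc.
  - apply HP.
    assert (RInt f c0 d0 <= RInt f a b) by (apply RInt_le_RInt_superinterval; auto; lra).
    assert (RInt f a b <= S) by (apply HS_ub; exists a, b; split; [lra | reflexivity]).
    change (Rabs (RInt f a b - S) < eps). rewrite Rabs_left1; lra.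
Qed.

Lemma RInt_reflect (f : R -> R) s P Q : (forall t, continuous f t) ->
  RInt (fun g => f (s - g)) P Q = RInt f (s - Q) (s - P).
Proof.
  intros Hc.
  assert (Hr : ex_RInt (fun g => f (-1 * g + s)) P Q).
  { apply ex_RInt_of_continuous. intros t.
    apply (continuous_comp (fun g => -1 * g + s) f); [| apply Hc].
    apply continuous_of_ex_derive. auto_derive. auto. }
  rewrite (RInt_ext_R _ (fun g => -1 * (-1 * f (-1 * g + s))))
    by (intros; replace (-1 * x + s) with (s - x) by ring; ring).
  rewrite RInt_scal_R by (apply (ex_RInt_scal (V := R_CompleteNormedModule)), Hr).
  assert (H := RInt_comp_lin (V := R_CompleteNormedModule) f (-1) s P Q
                 (ex_RInt_of_continuous f _ _ Hc)).
  change (RInt (fun g => -1 * f (-1 * g + s)) P Q = RInt f (-1 * P + s) (-1 * Q + s)) in H.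
  rewrite H, <- (opp_RInt_swap (V := R_CompleteNormedModule)) by apply ex_RInt_of_continuous, Hc.
  unfold opp; simpl. replace (-1 * Q + s) with (s - Q) by ring.
  replace (-1 * P + s) with (s - P) by ring. ring.
Qed.

Lemma RInt_le_of_reflect_le (f F : R -> R) s P Q :
  (forall t, continuous f t) -> (forall t, continuous F t) -> P <= Q -> P + Q = s ->
  (forall g, f g + f (s - g) <= F g + F (s - g)) -> RInt f P Q <= RInt F P Q.
Proof.
  intros Hf HF HPQ Hs Hle.
  assert (Hsym : forall h : R -> R, (forall t, continuous h t) ->
            RInt (fun g => h g + h (s - g)) P Q = 2 * RInt h P Q).
  { intros h Hh.
    rewrite (RInt_plus (V := R_CompleteNormedModule) h (fun g => h (s - g)))
      by (apply ex_RInt_of_continuous; intros; first [apply Hh | apply continuous_reflect, Hh]).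
    rewrite RInt_reflect by exact Hh.
    replace (s - Q) with P by lra. replace (s - P) with Q by lra.
    unfold plus; simpl. ring. }
  assert (Hcf : forall h : R -> R, (forall t, continuous h t) ->
            forall t, continuous (fun g => h g + h (s - g)) t).
  { intros h Hh t. apply (continuous_plus (V := R_NormedModule)); [apply Hh | apply continuous_reflect, Hh]. }
  enough (2 * RInt f P Q <= 2 * RInt F P Q) by lra.
  rewrite <- (Hsym f Hf), <- (Hsym F HF).
  apply RInt_le; auto; apply ex_RInt_of_continuous; apply Hcf; auto.
Qed.

(** * The kernel integrand *)

Lemma exp_reflect_pair_le Y u v : 0 <= u -> 0 <= v ->
  (exp Y - 1) * Rmax 0 (u - v) + (exp (- Y) - 1) * Rmax 0 (v - u)
  <= (exp Y - 1) * u + (exp (- Y) - 1) * v.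
Proof.
  intros Hu Hv. pose proof (exp_add_exp_opp_ge_2 Y).
  destruct (Rle_dec v u).
  - rewrite Rmax_right, Rmax_left by lra. nra.
  - rewrite Rmax_left, Rmax_right by lra. nra.
Qed.

Lemma phi_reflect b x g : b <> 0 ->
  phi (x / b - g) = exp (- (x * (x - 2 * b * g)) / (2 * b ^ 2)) * phi g.
Proof.
  intros Hb. unfold phi.
  rewrite (Rmult_comm (exp _)), Rmult_assoc, <- exp_plus. do 2 f_equal. field. exact Hb.
Qed.

Lemma exp_mul_phi_shift a b x g :
  exp (a * (x - 2 * b * g)) * phi g = exp (a * x + 2 * a ^ 2 * b ^ 2) * phi (g + 2 * a * b).
Proof.
  assert (E : exp (a * (x - 2 * b * g)) * exp (- g ^ 2 / 2)
              = exp (a * x + 2 * a ^ 2 * b ^ 2) * exp (- (g + 2 * a * b) ^ 2 / 2))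
    by (rewrite <- !exp_plus; f_equal; field).
  unfold phi.
  transitivity (/ sqrt (2 * PI) * (exp (a * (x - 2 * b * g)) * exp (- g ^ 2 / 2))); [ring |].
  rewrite E. ring.
Qed.

Lemma one_sub_pbar_mul_phi sigma gamma x g : 0 < sigma -> 0 < gamma ->
  (1 - pbar sigma gamma x g) * phi g = Rmax 0 (phi g - phi (x / (sigma * sqrt gamma) - g)).
Proof.
  intros Hs Hg. set (b := sigma * sqrt gamma).
  assert (Hb : 0 < b) by (apply Rmult_lt_0_compat; [lra | apply sqrt_lt_R0; lra]).
  assert (Hb2 : sigma ^ 2 * gamma = b ^ 2)
    by (unfold b; rewrite Rpow_mult_distr, pow2_sqrt by lra; reflexivity).
  assert (Hratio : phi_s (sigma ^ 2 * gamma) (x - sigma * sqrt gamma * g)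
                   / phi_s (sigma ^ 2 * gamma) (sigma * sqrt gamma * g)
                   = exp (- (x * (x - 2 * b * g)) / (2 * b ^ 2))).
  { fold b. rewrite Hb2. unfold phi_s.
    assert (0 < sqrt (2 * PI * b ^ 2)).
    { apply sqrt_lt_R0, Rmult_lt_0_compat; [apply Rgt_2PI_0 | apply pow_lt, Hb]. }
    replace (- (x * (x - 2 * b * g)) / (2 * b ^ 2))
      with (- (x - b * g) ^ 2 / (2 * b ^ 2) + - (- (b * g) ^ 2 / (2 * b ^ 2))) by (field; lra).
    rewrite exp_plus, exp_Ropp. field.
    split; [apply Rgt_not_eq, exp_pos | lra]. }
  unfold pbar. rewrite Hratio, phi_reflect by lra.
  pose proof (phi_pos g). set (r := exp _).
  replace (1 - Rmin 1 r) with (Rmax 0 (1 - r)) by (unfold Rmin, Rmax; repeat destruct Rle_dec; lra).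
  rewrite Rmax_mult by lra. f_equal; ring.
Qed.

(* Integrands of Q_γ W*_a in the Gaussian variable g, with b = σ√γ: [Qint] with
   the jump to 0, [Wphi] without it. *)
Definition Qint (b a x g : R) : R :=
  (exp (a * (x - 2 * b * g)) - 1) * Rmax 0 (phi g - phi (x / b - g)).

Definition Wphi (b a x g : R) : R := (exp (a * (x - 2 * b * g)) - 1) * phi g.

Lemma Qker_Wstar sigma cinf tau gamma a w : 0 < sigma -> 0 < gamma ->
  Qker sigma cinf tau gamma (Wstar a) w
  = int_R (Qint (sigma * sqrt gamma) a (tau gamma w + gamma * cinf)).
Proof.
  intros Hs Hg. unfold Qker, Wstar at 1.
  rewrite Rmult_0_r, exp_0, Rminus_diag, Rmult_0_l, Rplus_0_l.
  unfold int_R. f_equal. apply functional_extensionality. intros g.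
  unfold Qint, Wstar. rewrite Rmult_assoc, one_sub_pbar_mul_phi by assumption.
  do 4 f_equal. ring.
Qed.

Section Qint_bound.

Variables b a x : R.
Hypotheses (Hb : 0 < b) (Ha : 0 < a) (Hx : 0 <= x).

Lemma continuous_Qint g : continuous (Qint b a x) g.
Proof.
  unfold Qint. apply (continuous_mult (K := R_AbsRing)).
  - apply continuous_of_ex_derive. auto_derive. auto.
  - apply continuous_Rmax0, continuous_of_ex_derive. unfold phi. auto_derive. auto.
Qed.

Lemma continuous_Wphi g : continuous (Wphi b a x) g.
Proof. apply continuous_of_ex_derive. unfold Wphi, phi. auto_derive. auto. Qed.

Lemma Qint_ge0 g : 0 <= Qint b a x g.
Proof.
  unfold Qint. destruct (Rle_dec 0 (x - 2 * b * g)) as [Hy | Hy].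
  - apply Rmult_le_pos; [| apply Rmax_l].
    pose proof (exp_ineq1_le (a * (x - 2 * b * g))). nra.
  - rewrite Rmax_left; [lra |].
    rewrite phi_reflect by lra. pose proof (phi_pos g).
    enough (1 <= exp (- (x * (x - 2 * b * g)) / (2 * b ^ 2))) by nra.
    rewrite <- exp_0. apply exp_le.
    unfold Rdiv. apply Rmult_le_pos; [nra | left; apply Rinv_0_lt_compat; nra].
Qed.

Lemma Qint_reflect_le g :
  Qint b a x g + Qint b a x (x / b - g) <= Wphi b a x g + Wphi b a x (x / b - g).
Proof.
  unfold Qint, Wphi.
  replace (x - 2 * b * (x / b - g)) with (- (x - 2 * b * g)) by (field; lra).
  replace (x / b - (x / b - g)) with g by ring.
  rewrite Ropp_mult_distr_r_reverse.
  apply exp_reflect_pair_le; apply Rlt_le, phi_pos.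
Qed.

Lemma RInt_Wphi P Q : RInt (Wphi b a x) P Q
  = exp (a * x + 2 * a ^ 2 * b ^ 2) * RInt phi (P + 2 * a * b) (Q + 2 * a * b) - RInt phi P Q.
Proof.
  set (k := exp (a * x + 2 * a ^ 2 * b ^ 2)). set (d := 2 * a * b).
  assert (Hshift : ex_RInt (fun g => 1 * phi (1 * g + d)) P Q).
  { apply ex_RInt_of_continuous. intros t. apply continuous_of_ex_derive.
    unfold phi. auto_derive. auto. }
  rewrite (RInt_ext_R _ (fun g => k * (1 * phi (1 * g + d)) + -1 * phi g)).
  2: { intros g _. unfold Wphi. rewrite Rmult_minus_distr_r, exp_mul_phi_shift.
       fold k d. replace (1 * g + d) with (g + d) by ring. ring. }
  rewrite (RInt_plus (V := R_CompleteNormedModule)).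
  - assert (H := RInt_comp_lin (V := R_CompleteNormedModule) phi 1 d P Q (ex_RInt_phi _ _)).
    change (RInt (fun g => 1 * phi (1 * g + d)) P Q = RInt phi (1 * P + d) (1 * Q + d)) in H.
    unfold plus; simpl.
    rewrite (RInt_scal_R (fun g => 1 * phi (1 * g + d))), (RInt_scal_R phi), H, !Rmult_1_l
      by (exact Hshift || apply ex_RInt_phi).
    ring.
  - apply (ex_RInt_scal (V := R_CompleteNormedModule)), Hshift.
  - apply (ex_RInt_scal (V := R_CompleteNormedModule)), ex_RInt_phi.
Qed.

Lemma RInt_Qint_le c d eps : c <= d -> 0 < eps ->
  RInt (Qint b a x) c d <= exp (a * x + 2 * a ^ 2 * b ^ 2) - 1 + eps.
Proof.
  intros Hcd Heps.
  set (k := exp (a * x + 2 * a ^ 2 * b ^ 2)). set (delta := 2 * a * b).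
  assert (Hk : 1 <= k).
  { unfold k. rewrite <- exp_0. apply exp_le.
    assert (0 <= a * x) by nra. assert (0 <= a ^ 2 * b ^ 2) by nra. lra. }
  assert (Hdelta : 0 < delta) by (unfold delta; nra).
  set (Q := Rmax (Rmax (x / b - c) d) (k * delta / eps)).
  set (P := x / b - Q).
  assert (HQ1 : x / b - c <= Q) by (unfold Q; eapply Rle_trans; [apply Rmax_l | apply Rmax_l]).
  assert (HQ2 : d <= Q) by (unfold Q; eapply Rle_trans; [apply Rmax_r | apply Rmax_l]).
  assert (HQ3 : k * delta / eps <= Q) by apply Rmax_r.
  assert (HQ0 : 0 <= Q).
  { apply Rle_trans with (k * delta / eps); [| exact HQ3].
    apply Rlt_le, Rdiv_lt_0_compat; nra. }
  assert (Htail : k * (delta / (1 + Q)) <= eps).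
  { apply Rmult_le_reg_r with (1 + Q); [lra |].
    apply Rle_div_l in HQ3; [| lra].
    replace (k * (delta / (1 + Q)) * (1 + Q)) with (k * delta) by (field; lra). nra. }
  (* [P, Q] is symmetric about x/(2b), so the reflection applies; the shift by
     2ab then only costs the Gaussian tail beyond Q. *)
  apply Rle_trans with (RInt (Qint b a x) P Q).
  { apply RInt_le_RInt_superinterval; [apply continuous_Qint | apply Qint_ge0 | unfold P; lra | lra | lra]. }
  apply Rle_trans with (RInt (Wphi b a x) P Q).
  { apply RInt_le_of_reflect_le with (s := x / b);
      [apply continuous_Qint | apply continuous_Wphi | unfold P; lra | unfold P; ring |
       apply Qint_reflect_le]. }
  rewrite RInt_Wphi. fold k delta.
  pose proof (RInt_phi_shift_le k P Q delta Hk HQ0 (Rlt_le _ _ Hdelta)). lra.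
Qed.

Lemma int_R_Qint_le : int_R (Qint b a x) <= exp (a * x + 2 * a ^ 2 * b ^ 2) - 1.
Proof.
  apply int_R_le; [apply continuous_Qint | apply Qint_ge0 |].
  intros c d Hcd. apply Rle_plus_epsilon. intros eps Heps. apply RInt_Qint_le; assumption.
Qed.

End Qint_bound.

Lemma Qker_Wstar_le sigma cinf tau gamma a w : 0 < sigma -> 0 < gamma -> 0 < a ->
  0 <= tau gamma w + gamma * cinf ->
  Qker sigma cinf tau gamma (Wstar a) w
  <= exp (a * (tau gamma w + gamma * cinf) + 2 * a ^ 2 * (sigma ^ 2 * gamma)) - 1.
Proof.
  intros Hs Hg Ha Hx.
  assert (Hb2 : (sigma * sqrt gamma) ^ 2 = sigma ^ 2 * gamma)
    by (rewrite Rpow_mult_distr, pow2_sqrt by lra; reflexivity).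
  rewrite Qker_Wstar, <- Hb2 by assumption.
  apply int_R_Qint_le; [apply Rmult_lt_0_compat; [| apply sqrt_lt_R0] |..]; assumption.
Qed.

(** * Drift of the exponent *)

Lemma le_mul_of_forall_gt t w q : 0 <= q -> (forall r, w < r -> t <= r * q) -> t <= w * q.
Proof.
  intros Hq H. apply Rle_plus_epsilon. intros eps Heps.
  set (e := eps / (q + 1)).
  assert (He : 0 < e) by (apply Rdiv_lt_0_compat; lra).
  assert (Heq : e * (q + 1) = eps) by (unfold e; field; lra).
  specialize (H (w + e) ltac:(lra)). nra.
Qed.

Lemma le_mul_of_ratio_le_gt (tau : R -> R) R1 q w :
  (forall r, 0 <= r -> 0 <= tau r) -> (forall r s, 0 <= r -> r <= s -> tau r <= tau s) ->
  (forall r, R1 < r -> tau r / r <= q) -> 0 <= R1 -> R1 <= w -> tau w <= w * q.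
Proof.
  intros Hpos Hmono Hq HR1 Hw.
  assert (Hr : forall r, R1 < r -> tau r <= r * q)
    by (intros r Hr; rewrite Rmult_comm; apply Rle_div_l; [lra | auto]).
  assert (0 <= q).
  { pose proof (Hr (R1 + 1) ltac:(lra)). pose proof (Hpos (R1 + 1) ltac:(lra)). nra. }
  apply le_mul_of_forall_gt; [assumption |].
  intros r Hwr. apply Rle_trans with (tau r); [apply Hmono | apply Hr]; lra.
Qed.

Lemma le_mul_of_ratio_le (tau : R -> R) q w :
  tau 0 = 0 -> (forall r, 0 < r -> tau r / r <= q) -> 0 <= w -> tau w <= w * q.
Proof.
  intros H0 Hq [Hw | <-].
  - rewrite Rmult_comm. apply Rle_div_l; auto.
  - rewrite H0. lra.
Qed.

Lemma exp_sub_1_le_contract K u v : 0 <= v -> K <= u - v ->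
  exp K - 1 <= exp (- v) * (exp u - 1).
Proof.
  intros Hv HK.
  assert (exp K <= exp (- v) * exp u) by (rewrite <- exp_plus; apply exp_le; lra).
  assert (exp (- v) <= 1) by (rewrite <- exp_0; apply exp_le; lra).
  lra.
Qed.

Lemma exp_sub_1_le_expand K u v : 0 <= v -> K <= u + v ->
  exp K - 1 <= exp v * (exp u - 1) + v * exp v.
Proof.
  intros Hv HK.
  assert (exp K <= exp v * exp u) by (rewrite <- exp_plus; apply exp_le; lra).
  assert (exp v - 1 <= v * exp v).
  { assert (Hinv : exp (- v) * exp v = 1)
      by (rewrite <- exp_plus, Rplus_opp_l; apply exp_0).
    assert (H1 := exp_ineq1_le (- v)).
    assert ((1 + - v) * exp v <= exp (- v) * exp v)
      by (apply Rmult_le_compat_r; [apply Rlt_le, exp_pos | exact H1]).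
    nra. }
  lra.
Qed.

Lemma drift_far a m c s2 gamma Rt w t :
  0 < a -> 0 < m -> 0 <= gamma -> 0 <= c -> 0 <= s2 ->
  4 * a * s2 + 2 * c <= m * Rt -> Rt <= w -> t <= w * (1 - gamma * m) ->
  a * (t + gamma * c) + 2 * a ^ 2 * (s2 * gamma) <= a * w - gamma * (a * m * Rt / 8).
Proof.
  intros Ha Hm Hg Hc Hs HRt Hw Ht.
  assert (Hmw : m * Rt <= m * w) by (apply Rmult_le_compat_l; lra).
  assert (0 <= a * s2) by nra.
  assert (Hgap : m * Rt / 8 <= m * w - c - 2 * a * s2) by lra.
  assert (Hag : 0 <= a * gamma) by nra.
  assert (a * gamma * (m * Rt / 8) <= a * gamma * (m * w - c - 2 * a * s2))
    by (apply Rmult_le_compat_l; assumption).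
  assert (a * t <= a * (w * (1 - gamma * m))) by (apply Rmult_le_compat_l; lra).
  nra.
Qed.

Lemma drift_near a L c s2 gamma r w t :
  0 < a -> 0 <= L -> 0 <= gamma -> 0 <= w <= r -> t <= w * (1 + gamma * L) ->
  a * (t + gamma * c) + 2 * a ^ 2 * (s2 * gamma)
  <= a * w + gamma * (a * (c + 2 * a * s2 + L * r)).
Proof.
  intros Ha HL Hg Hw Ht.
  assert (a * t <= a * (w * (1 + gamma * L))) by (apply Rmult_le_compat_l; lra).
  assert (0 <= a * gamma * L) by (repeat apply Rmult_le_pos; lra).
  assert (a * gamma * L * w <= a * gamma * L * r) by (apply Rmult_le_compat_l; lra).
  nra.
Qed.

Lemma gbar1_le_gbar sigma gbar cinf R1 m a : gbar1 sigma gbar cinf R1 m a <= gbar.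
Proof. unfold gbar1. eapply Rle_trans; apply Rmin_l. Qed.

Lemma R1_le_Rtilde sigma cinf R1 m a : R1 <= Rtilde sigma cinf R1 m a.
Proof.
  unfold Rtilde. eapply Rle_trans; [| apply Rmax_l].
  eapply Rle_trans; [apply Rmax_r | apply Rmax_l].
Qed.

Lemma drift_le_m_Rtilde sigma cinf R1 m a : 0 < m ->
  4 * a * sigma ^ 2 + 2 * cinf <= m * Rtilde sigma cinf R1 m a.
Proof.
  intros Hm. rewrite (Rmult_comm m). apply Rle_div_l; [lra |].
  unfold Rtilde. eapply Rle_trans; [apply Rmax_r | apply Rmax_l].
Qed.

Lemma Rtilde_le_Ra sigma gbar cinf R1 m a : Rtilde sigma cinf R1 m a <= Ra sigma gbar cinf R1 m a.
Proof. apply Rmax_l. Qed.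

Lemma drift_term_le_Da sigma gbar cinf R1 L m a : 0 < sigma -> 0 < a ->
  a * (cinf + 2 * a * sigma ^ 2 + L * Ra sigma gbar cinf R1 m a)
  * exp (gbar * (a * (cinf + 2 * a * sigma ^ 2 + L * Ra sigma gbar cinf R1 m a)))
  <= Da sigma gbar cinf R1 L m a.
Proof.
  intros Hs Ha. unfold Da. set (r := Ra sigma gbar cinf R1 m a).
  assert (Hr : 1 <= r).
  { apply Rle_trans with (Rtilde sigma cinf R1 m a); [| apply Rtilde_le_Ra].
    unfold Rtilde. do 2 (eapply Rle_trans; [| apply Rmax_l]). apply Rmax_l. }
  assert (0 <= 2 * sigma ^ 2 * / sqrt (2 * PI) * a * exp ((a + 2 * sigma * sqrt gbar * a) ^ 2 / 2)).
  { pose proof (Rinv_0_lt_compat _ sqrt_2PI_pos). pose proof (pow2_ge_0 sigma).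
    pose proof (exp_pos ((a + 2 * sigma * sqrt gbar * a) ^ 2 / 2)).
    repeat apply Rmult_le_pos; lra. }
  assert (0 <= 2 * sigma ^ 2 * a ^ 2 * Rpower (lam sigma cinf R1 m a) (2 * gbar) * Wstar a r).
  { assert (0 <= Wstar a r).
    { unfold Wstar. pose proof (exp_ineq1_le (a * r)). nra. }
    pose proof (exp_pos (2 * gbar * ln (lam sigma cinf R1 m a))).
    unfold Rpower. repeat apply Rmult_le_pos; lra. }
  replace (a * gbar * (cinf + 2 * a * sigma ^ 2 + L * r))
    with (gbar * (a * (cinf + 2 * a * sigma ^ 2 + L * r))) by ring.
  lra.
Qed.

Lemma Wstar_drift_far sigma cinf R1 m a gamma w t :
  0 < m -> 0 < a -> 0 <= cinf -> 0 < gamma -> Rtilde sigma cinf R1 m a <= w ->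
  t <= w * (1 - gamma * m) ->
  exp (a * (t + gamma * cinf) + 2 * a ^ 2 * (sigma ^ 2 * gamma)) - 1
  <= Rpower (lam sigma cinf R1 m a) gamma * Wstar a w.
Proof.
  intros Hm Ha Hc Hg Hw Ht.
  pose proof (drift_le_m_Rtilde sigma cinf R1 m a Hm).
  unfold lam, Wstar. rewrite Rpower_exp. set (Rt := Rtilde sigma cinf R1 m a) in *.
  replace (gamma * (- a * m * Rt / 8)) with (- (gamma * (a * m * Rt / 8))) by field.
  apply exp_sub_1_le_contract.
  - assert (0 <= a * sigma ^ 2) by (apply Rmult_le_pos; [lra | apply pow2_ge_0]).
    apply Rmult_le_pos; [lra |]. unfold Rdiv. apply Rmult_le_pos; nra.
  - apply drift_far; auto using Rlt_le, pow2_ge_0.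
Qed.

Lemma Wstar_drift_near sigma gbar cinf R1 L m a gamma w t :
  0 < sigma -> 0 < a -> 0 <= cinf -> 0 <= L -> 0 < gamma <= gbar ->
  0 <= w <= Ra sigma gbar cinf R1 m a -> t <= w * (1 + gamma * L) ->
  exp (a * (t + gamma * cinf) + 2 * a ^ 2 * (sigma ^ 2 * gamma)) - 1
  <= Rpower (Ba sigma gbar cinf R1 L m a) gamma * Wstar a w + gamma * Da sigma gbar cinf R1 L m a.
Proof.
  intros Hs Ha Hc HL [Hg Hgbar] Hw Ht.
  pose proof (drift_term_le_Da sigma gbar cinf R1 L m a Hs Ha) as HDa.
  unfold Ba, Wstar. rewrite Rpower_exp.
  set (r := Ra sigma gbar cinf R1 m a) in *.
  set (k := a * (cinf + 2 * a * sigma ^ 2 + L * r)) in *.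
  assert (Hk : 0 <= k).
  { assert (0 <= a * sigma ^ 2) by (apply Rmult_le_pos; [lra | apply pow2_ge_0]).
    assert (0 <= L * r) by (apply Rmult_le_pos; lra).
    unfold k. nra. }
  assert (Hexp : exp (gamma * k) <= exp (gbar * k)) by (apply exp_le, Rmult_le_compat_r; lra).
  assert (gamma * k * exp (gamma * k) <= gamma * (k * exp (gbar * k)))
    by (rewrite Rmult_assoc; apply Rmult_le_compat_l; [lra | apply Rmult_le_compat_l; lra]).
  assert (gamma * (k * exp (gbar * k)) <= gamma * Da sigma gbar cinf R1 L m a)
    by (apply Rmult_le_compat_l; lra).
  pose proof (exp_sub_1_le_expand _ (a * w) (gamma * k) ltac:(nra)
                (drift_near a L cinf (sigma ^ 2) gamma r w t Ha HL (Rlt_le _ _ Hg) Hw Ht)).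
  lra.
Qed.

Theorem proposition46
  (sigma gbar cinf R1 L m a : R) (tau : R -> R -> R)
  (Hsigma : 0 < sigma) (Hgbar : 0 < gbar) (Hcinf : 0 <= cinf)
  (HR1 : 0 <= R1) (HL : 0 <= L) (Hm : 0 < m) (Ha : 0 < a)
  (Htau : forall gamma, 0 < gamma <= gbar ->
     (forall r, 0 <= r -> 0 <= tau gamma r)
     /\ (forall r s, 0 <= r -> r <= s -> tau gamma r <= tau gamma s)
     /\ tau gamma 0 = 0
     /\ (forall r, 0 < r -> tau gamma r / r <= 1 + gamma * L)
     /\ (forall r, R1 < r -> tau gamma r / r <= 1 - gamma * m)) :
  forall w gamma, 0 <= w -> 0 < gamma <= gbar1 sigma gbar cinf R1 m a ->
    Qker sigma cinf tau gamma (Wstar a) w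
    <= Rpower (lam sigma cinf R1 m a) gamma * Wstar a w
         * indic (Rle_dec (Ra sigma gbar cinf R1 m a) w)
       + Rpower (Ba sigma gbar cinf R1 L m a) gamma * Wstar a w
         * indic (Rlt_dec w (Ra sigma gbar cinf R1 m a))
       + gamma * Da sigma gbar cinf R1 L m a
         * indic (Rlt_dec w (Ra sigma gbar cinf R1 m a)).
Proof.
  intros w gamma Hw [Hg Hg1].
  pose proof (Rle_trans _ _ _ Hg1 (gbar1_le_gbar _ _ _ _ _ _)) as Hgbar1.
  destruct (Htau gamma (conj Hg Hgbar1)) as (Hpos & Hmono & H0 & Hexpand & Hcontract).
  eapply Rle_trans.
  { apply Qker_Wstar_le; try assumption. pose proof (Hpos w Hw). nra. }
  pose proof (R1_le_Rtilde sigma cinf R1 m a). pose proof (Rtilde_le_Ra sigma gbar cinf R1 m a).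
  unfold indic.
  destruct (Rle_dec (Ra sigma gbar cinf R1 m a) w) as [Hfar | Hnear];
    destruct (Rlt_dec w (Ra sigma gbar cinf R1 m a)); try lra;
    rewrite ?Rmult_1_r, ?Rmult_0_r, ?Rplus_0_r, ?Rplus_0_l.
  - apply Wstar_drift_far; try assumption; [lra |].
    apply (le_mul_of_ratio_le_gt (tau gamma) R1); auto; lra.
  - apply Wstar_drift_near; try assumption; [lra | lra |].
    apply le_mul_of_ratio_le; auto.
Qed.
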